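(* Let $G$ be a directed graph, and let $p\ge 2$ and $r\ge 1$ be integers. If $G$ is $p$-solvable, then the lexicographic product $(G,r)$ is $pr$-solvable.
   Context: All graphs are finite. A directed graph $D=(V,E)$ has arcs $E \subseteq \{(u,v)\in V^2 : u \neq v\}$; bidirectional pairs are allowed. An undirected graph is identified with the directed graph having both arcs $(u,v)$ and $(v,u)$ for each edge $\{u,v\}$. The in-neighbourhood of $v$ is $N^-(v)=\{u : (u,v)\in E\}$. For an integer $q\ge 2$ let $[q]=\{0,1,\dots,q-1\}$. A $D$-function over $[q]$ is a map $f=(f_v)_{v\in V}:[q]^V\to[q]^V$ such that each $f_v(x)$ depends only on $(x_u)_{u\in N^-(v)}$. The graph $D$ is $q$-solvable if there is a $D$-function $f$ over $[q]$ such that for every $x\in[q]^V$ there exists a vertex $v$ with $f_v(x)=x_v$. The lexicographic product $(D,r)$ of a directed graph $D=(V,E)$ with the clique $K_r$ is the directed graph with vertex set $V\times\{0,\dots,r-1\}$ in which $((u,a),(v,b))$ is an arc if and only if either $(u,v)\in E$, or $u=v$ and $a\ne b$. *)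

From mathcomp Require Import all_boot.
Set Implicit Arguments. Unset Strict Implicit. Unset Printing Implicit Defensive.

(* A directed graph is a finite vertex type V with arc relation E : rel V
   (E u v means (u,v) is an arc); loops are excluded by requiring
   [irreflexive E] in statements. *)

Definition is_D_function (V : finType) (E : rel V) (q : nat)
  (f : {ffun V -> 'I_q} -> {ffun V -> 'I_q}) : Prop :=
  forall (v : V) (x y : {ffun V -> 'I_q}),
    (forall u : V, E u v -> x u = y u) -> f x v = f y v.

Definition solvable (V : finType) (E : rel V) (q : nat) : Prop :=
  exists f : {ffun V -> 'I_q} -> {ffun V -> 'I_q},
    is_D_function E f /\
    forall x : {ffun V -> 'I_q}, exists v : V, f x v = x v.

(* Lexicographic product (D, r) of D with the clique K_r. *)
Definition lex_prod (V : finType) (E : rel V) (r : nat) : rel (V * 'I_r) :=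
  fun a b => E a.1 b.1 || ((a.1 == b.1) && (a.2 != b.2)).
Arguments lex_prod [V] E r.
Arguments solvable [V] E q.

From mathcomp Require Import all_boot.
From mathcomp Require Import zify.
Set Implicit Arguments.

(* Write a symbol z of [p*r] as a pair of digits
   z = hi(z) * r + lo(z) with hi(z) in [p] and lo(z) in [r].  In the product
   (G, r) every vertex v of G becomes a clique {(v,i) : i < r}.  Given a
   configuration x of (G, r), each clique of v elects the member
   c(v) = sum_j lo(x(v,j)) mod r, and the high digit of x at the elected
   member gives a configuration y of G.  The new function at (v,i) outputs
     high digit:  f(y)(v),
     low digit :  the unique b < r with b + sum_(j <> i) lo(x(v,j)) = i mod r.
   Both digits only read in-neighbours of (v,i): the vertices (u,j) with
   u -> v in G, and the other members of the clique of v.  If f(y)(v) = y(v),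
   then at (v, c(v)) the low digit reproduces lo(x(v,c(v))) and the high digit
   reproduces hi(x(v,c(v))), so (v, c(v)) is a fixed vertex. *)

Section Digits.
Variables p r : nat.

Lemma ord_mul_gt0r (z : 'I_(p * r)) : 0 < r.
Proof. by case: r z => [|//] [z]; rewrite muln0. Qed.

Definition digit_lo (z : 'I_(p * r)) : 'I_r :=
  Ordinal (ltn_pmod z (ord_mul_gt0r z)).

Lemma digit_hi_subproof (z : 'I_(p * r)) : z %/ r < p.
Proof. by rewrite ltn_divLR ?ord_mul_gt0r. Qed.

Definition digit_hi (z : 'I_(p * r)) : 'I_p := Ordinal (digit_hi_subproof z).

Lemma pack_subproof (a : 'I_p) (b : 'I_r) : a * r + b < p * r.
Proof.
have: a.+1 * r <= p * r by rewrite leq_mul2r ltn_ord orbT.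
by rewrite mulSn addnC; apply: leq_trans; rewrite ltn_add2l.
Qed.

Definition pack (a : 'I_p) (b : 'I_r) : 'I_(p * r) :=
  Ordinal (pack_subproof a b).

Lemma pack_digits (z : 'I_(p * r)) : pack (digit_hi z) (digit_lo z) = z.
Proof. by apply: val_inj; rewrite /= -divn_eq. Qed.

End Digits.

Arguments digit_lo {p r} z.
Arguments digit_hi {p r} z.

Section ModularSubtraction.
Variable r : nat.

Definition msub (i t : nat) : nat := (i + (r - t %% r)) %% r.

Lemma msub_lt i t : 0 < r -> msub i t < r.
Proof. exact: ltn_pmod. Qed.

Lemma msub_addK t l : l < r -> msub ((t + l) %% r) t = l.
Proof.
move=> lt_lr; have r_gt0 : 0 < r by apply: leq_ltn_trans lt_lr.
have tr_lt : t %% r < r by rewrite ltn_pmod.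
rewrite /msub modnDml {1}(divn_eq t r).
have -> : t %/ r * r + t %% r + l + (r - t %% r) = l + t %/ r * r + r by lia.
by rewrite modnDr addnC modnMDl modn_small.
Qed.

End ModularSubtraction.

Section Blowup.
Variables (V : finType) (p r : nat).
Hypothesis r_gt0 : 0 < r.

Notation config := {ffun V * 'I_r -> 'I_(p * r)}.

Definition elected (x : config) (v : V) : 'I_r :=
  Ordinal (ltn_pmod (\sum_(j < r) digit_lo (x (v, j))) r_gt0).

Definition project (x : config) : {ffun V -> 'I_p} :=
  [ffun v => digit_hi (x (v, elected x v))].

Definition others_sum (x : config) (v : V) (i : 'I_r) : nat :=
  \sum_(j < r | j != i) digit_lo (x (v, j)).

Definition lift (f : {ffun V -> 'I_p} -> {ffun V -> 'I_p}) (x : config)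
  : config :=
  [ffun w : V * 'I_r =>
     pack (f (project x) w.1)
          (Ordinal (msub_lt r w.2 (others_sum x w.1 w.2) r_gt0))].

Lemma project_local (x x' : config) (u : V) :
  (forall j, x (u, j) = x' (u, j)) -> project x u = project x' u.
Proof.
move=> eq_xu; rewrite !ffunE.
have -> : elected x u = elected x' u.
  by apply: val_inj; congr (_ %% r); apply: eq_bigr => j _; rewrite eq_xu.
by rewrite eq_xu.
Qed.

Lemma lift_D_function (E : rel V) f :
  is_D_function E f -> is_D_function (lex_prod E r) (lift f).
Proof.
move=> fD [v i] x x' eq_in; rewrite !ffunE /=; congr pack.
  apply: fD => u Euv; apply: project_local => j.
  by apply: eq_in; rewrite /lex_prod /= Euv.
apply: val_inj; rewrite /= /others_sum; congr msub.
apply: eq_bigr => j ne_ji; congr (digit_lo _); apply: eq_in.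
by rewrite /lex_prod /= eqxx ne_ji orbT.
Qed.

Lemma lift_lo_elected (x : config) (v : V) :
  msub r (elected x v) (others_sum x v (elected x v))
  = digit_lo (x (v, elected x v)).
Proof.
rewrite {1}/elected /= (bigD1 (elected x v)) //= addnC.
exact: msub_addK (ltn_pmod _ r_gt0).
Qed.

Lemma lift_fixed (f : {ffun V -> 'I_p} -> {ffun V -> 'I_p}) (x : config) (v : V) :
  f (project x) v = project x v -> lift f x (v, elected x v) = x (v, elected x v).
Proof.
move=> fix_v; rewrite ffunE /= fix_v ffunE -[RHS]pack_digits; congr pack.
by apply: val_inj; rewrite /= lift_lo_elected.
Qed.

End Blowup.

Arguments elected {V p r} r_gt0 x v.
Arguments project {V p r} r_gt0 x.
Arguments lift {V p r} r_gt0 f x.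

Theorem lemma2 (V : finType) (E : rel V) (p r : nat) :
  irreflexive E -> 2 <= p -> 1 <= r ->
  solvable E p -> solvable (lex_prod E r) (p * r).
Proof.
move=> _ _ r_gt0 [f [fD f_solves]].
exists (lift r_gt0 f); split; first exact: lift_D_function.
move=> x; have [v fix_v] := f_solves (project r_gt0 x).
by exists (v, elected r_gt0 x v); apply: lift_fixed.
Qed.
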